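(* Let $1\le d\le n-2$ and let $H$ be a $d$-hypercut over $[n]$. Then the facet graph $G_d(H)$ is $(n-d-1)$-connected.
   Context: Fix a field $\mathbb F$. A $d$-simplex is a $(d+1)$-element subset of $[n]$ oriented by increasing order. For a simplex $\rho$ and $\tau=\rho\setminus\{p\}$ with $p$ the $i$-th smallest element of $\rho$, $\mathrm{sign}(\rho,\tau)=(-1)^{i-1}$. A $d$-cochain is a formal $\mathbb F$-combination of $d$-simplices; the coboundary is $\delta\tau=\sum_{p\in[n]\setminus\tau}\mathrm{sign}(\tau\cup\{p\},\tau)(\tau\cup\{p\})$, extended linearly. A $d$-cocycle is a $d$-cochain $Z$ with $\delta Z=0$; a $d$-hypercut is a nonzero $d$-cocycle $H$ such that every $d$-cocycle supported in $\mathrm{Supp}(H)$ is a scalar multiple of $H$. The facet graph $G_d(H)$ has vertex set $\mathrm{Supp}(H)$, two $d$-simplices adjacent iff they share a $(d-1)$-face. A graph is $k$-connected if deleting any set of fewer than $k$ of its vertices leaves a nonempty connected graph. *)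

From HB Require Import structures.
From mathcomp Require Import all_boot all_order all_algebra.
Set Implicit Arguments. Unset Strict Implicit. Unset Printing Implicit Defensive.
Import GRing.Theory.
Local Open Scope ring_scope.

(* Vertex set [n] is 'I_n; a simplex is a finite set of vertices, a
   d-simplex one of cardinality d+1, oriented by increasing order. *)

Definition cochain (F : fieldType) (n : nat) := {ffun {set 'I_n} -> F}.

Definition is_dcochain (F : fieldType) (n d : nat) (Z : cochain F n) : Prop :=
  forall s : {set 'I_n}, Z s != 0 -> #|s| = d.+1.

(* sign(rho, rho \ {p}) = (-1)^(i-1), where p is the i-th smallest of rho;
   i-1 = number of elements of rho smaller than p. *)
Definition simplex_sign (F : fieldType) (n : nat) (rho : {set 'I_n}) (p : 'I_n) : F :=
  (-1) ^+ #|[set q in rho | (q < p)%N]|.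

(* Coefficient of rho in delta Z, obtained by expanding
   delta tau = sum_{p notin tau} sign(tau+p, tau) (tau+p) linearly. *)
Definition coboundary_coef (F : fieldType) (n : nat) (Z : cochain F n)
    (rho : {set 'I_n}) : F :=
  \sum_(p in rho) simplex_sign F rho p * Z (rho :\ p).

(* Z is a d-cocycle: a d-cochain with delta Z = 0 (delta Z is supported on
   (d+1)-simplices). *)
Definition is_dcocycle (F : fieldType) (n d : nat) (Z : cochain F n) : Prop :=
  is_dcochain d Z /\
  forall rho : {set 'I_n}, #|rho| = d.+2 -> coboundary_coef Z rho = 0.

Definition supp (F : fieldType) (n : nat) (Z : cochain F n) : {set {set 'I_n}} :=
  [set s | Z s != 0].

Definition is_hypercut (F : fieldType) (n d : nat) (H : cochain F n) : Prop :=
  [/\ is_dcocycle d H, H != 0 &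
      forall Z : cochain F n, is_dcocycle d Z -> supp Z \subset supp H ->
        exists a : F, forall s, Z s = a * H s].

Definition facet_adj (n d : nat) : rel {set 'I_n} :=
  fun s t => (s != t) && (#|s :&: t| == d)%N.

Definition induced_connected (T : finType) (e : rel T) (W : {set T}) : Prop :=
  forall x y, x \in W -> y \in W ->
    connect (fun u v => [&& u \in W, v \in W & e u v]) x y.

Definition k_connected (T : finType) (V : {set T}) (e : rel T) (k : nat) : Prop :=
  forall S : {set T}, S \subset V -> (#|S| < k)%N ->
    V :\: S != set0 /\ induced_connected e (V :\: S).

(* The facet graph G_d(H) has vertex set Supp(H) and adjacency facet_adj. *)

From HB Require Import structures.
From mathcomp Require Import all_boot all_order all_algebra.
From mathcomp Require Import zify.
Import GRing.Theory.
Set Implicit Arguments. Unset Strict Implicit. Unset Printing Implicit Defensive.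
Local Open Scope ring_scope.

(* A nonzero d-cocycle has at least n - d simplices in its support: fixing one,
   x, each vertex w outside x yields another support simplex inside w |: x
   containing w.  Hence removing fewer than n - d - 1 simplices S leaves
   something.  For connectivity, let A be a union of components of
   supp H \ S.  The coboundary of the restriction H|A can only be nonzero on
   (d+1)-simplices containing a member of S, and because S is small such a
   cocycle is the coboundary of a cochain e supported on S (induction on |S|,
   correcting one member of S at a time).  Then H|A - e is a cocycle supported
   in supp H, hence a multiple of H by minimality, so A is empty or all of
   supp H \ S. *)

HB.instance Definition _ (F : fieldType) (n : nat) := GRing.Zmodule.on (cochain F n).

Section Cochains.
Variables (F : fieldType) (n : nat).
Implicit Types (g H Q R : cochain F n) (s t rho pi A B : {set 'I_n}) (p q w : 'I_n).
Implicit Types (S : {set {set 'I_n}}).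

Definition coboundary g : cochain F n := [ffun rho => coboundary_coef g rho].

Definition coclosed (k : nat) R := forall pi, #|pi| = k -> coboundary_coef R pi = 0.

Definition elementary_cochain (a : F) s : cochain F n :=
  [ffun t => if t == s then a else 0].

Lemma simplex_sign_neq0 rho p : simplex_sign F rho p != 0.
Proof. by rewrite expf_neq0 // oppr_eq0 oner_eq0. Qed.

Lemma simplex_signD1 pi p q : p \in pi ->
  simplex_sign F (pi :\ p) q = (if (p < q)%N then -1 else 1) * simplex_sign F pi q.
Proof.
move=> p_pi; rewrite /simplex_sign.
have -> : [set r in pi :\ p | (r < q)%N] = [set r in pi | (r < q)%N] :\ p.
  by apply/setP=> r; rewrite !inE andbA.
rewrite [in RHS](cardsD1 p) inE p_pi /=.
by case: (p < q)%N; rewrite /= ?add0n ?mul1r // add1n exprS mulrA mulrNN !mul1r.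
Qed.

Lemma coboundary_coefB g1 g2 rho :
  coboundary_coef (g1 - g2) rho = coboundary_coef g1 rho - coboundary_coef g2 rho.
Proof.
by rewrite /coboundary_coef -sumrB; apply: eq_bigr => p _; rewrite !ffunE mulrBr.
Qed.

Lemma coboundary_coefD g1 g2 rho :
  coboundary_coef (g1 + g2) rho = coboundary_coef g1 rho + coboundary_coef g2 rho.
Proof.
by rewrite /coboundary_coef -big_split; apply: eq_bigr => p _; rewrite !ffunE mulrDr.
Qed.

(* The two terms indexed by an unordered pair {p, q} of vertices of pi carry
   opposite signs, so the double sum is antisymmetric and vanishes. *)
Lemma coboundary_coefK g pi : coboundary_coef (coboundary g) pi = 0.
Proof.
pose T p q := simplex_sign F pi p * simplex_sign F pi q * g (pi :\: [set p; q]).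
pose u p q := if (q < p)%N then T p q else 0.
have T_sym p q : T p q = T q p.
  by rewrite /T setUC [simplex_sign F pi p * _]mulrC.
have inner p : p \in pi ->
    simplex_sign F pi p * coboundary g (pi :\ p) = \sum_(q in pi) (u p q - u q p).
  move=> p_pi; rewrite ffunE /coboundary_coef big_distrr /=.
  rewrite (bigD1 p p_pi) /= /u ltnn subrr add0r.
  apply: eq_big => [q|q]; first by rewrite !inE andbC.
  rewrite !inE => /andP [qp q_pi].
  rewrite (simplex_signD1 q p_pi) setDDl.
  case: ltngtP => [pq|qp'|eqpq].
  - by rewrite sub0r -T_sym /T mulN1r mulNr mulrN !mulrA.
  - by rewrite subr0 mul1r /T !mulrA.
  - by move: qp; rewrite -val_eqE /= eqpq eqxx.
rewrite /coboundary_coef (eq_bigr _ inner).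
under eq_bigr do rewrite sumrB.
by rewrite sumrB exchange_big subrr.
Qed.

Lemma coclosed_coboundary k g : coclosed k (coboundary g).
Proof. by move=> pi _; apply: coboundary_coefK. Qed.

Lemma coclosedB k R1 R2 : coclosed k R1 -> coclosed k R2 -> coclosed k (R1 - R2).
Proof.
by move=> R1_closed R2_closed pi pi_k; rewrite coboundary_coefB R1_closed ?R2_closed ?subr0.
Qed.

Lemma coboundary_coef_elementary_eq0 a s rho :
  ~~ (s \subset rho) -> coboundary_coef (elementary_cochain a s) rho = 0.
Proof.
move=> s_rho; rewrite /coboundary_coef big1 // => p p_rho; rewrite ffunE.
case: eqP => [e|]; last by rewrite mulr0.
by case/negP: s_rho; rewrite -e subD1set.
Qed.

Lemma coboundary_coef_elementaryU1 a s w : w \notin s ->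
  coboundary_coef (elementary_cochain a s) (w |: s) = simplex_sign F (w |: s) w * a.
Proof.
move=> ws; rewrite /coboundary_coef (bigD1 w) ?setU11 //= ffunE setU1K // eqxx.
rewrite big1 ?addr0 // => p /andP [p_ws pw]; rewrite ffunE.
case: eqP => [e|]; last by rewrite mulr0.
by move: ws; rewrite -e !inE eq_sym (negbTE pw) eqxx.
Qed.

Lemma coboundary_eq0_face_transfer Q s w1 w2 :
  w1 \notin s -> w2 \notin s -> w1 != w2 ->
  coboundary_coef Q (w1 |: (w2 |: s)) = 0 ->
  {in s, forall p, Q ((w1 |: (w2 |: s)) :\ p) = 0} ->
  Q (w1 |: s) = 0 -> Q (w2 |: s) = 0.
Proof.
move=> w1s w2s w12 Q_closed Q_faces Q1.
have w1n : w1 \notin w2 |: s by rewrite !inE negb_or w12.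
move: Q_closed; rewrite /coboundary_coef (bigD1 w1) ?setU11 //= setU1K //.
rewrite (bigD1 w2) /=; last by rewrite !inE eqxx orbT eq_sym w12.
rewrite setUCA setU1K ?Q1 ?mulr0 ?add0r; last by rewrite !inE negb_or eq_sym w12.
rewrite big1 ?addr0; last first.
  move=> p /andP [/andP [p_in pw1] pw2]; rewrite setUCA Q_faces ?mulr0 //.
  by move: p_in; rewrite !inE (negbTE pw1) (negbTE pw2).
by move/eqP; rewrite mulf_eq0 (negbTE (simplex_sign_neq0 _ _)) => /eqP.
Qed.

Lemma subsetU1_notin t A w : t \subset w |: A -> w \notin t -> t \subset A.
Proof.
move=> /subsetP tA wt; apply/subsetP => x xt.
by case/setU1P: (tA x xt) => // xw; rewrite -xw xt in wt.
Qed.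

Lemma setU1_of_subset_card s rho :
  s \subset rho -> #|rho| = #|s|.+1 -> exists2 w, w \notin s & rho = w |: s.
Proof.
move=> s_rho rho_card.
have : #|rho :\: s| = 1%N by rewrite cardsDS // rho_card subSn // subnn.
move/eqP/cards1P => [w rho_s]; have : w \in rho :\: s by rewrite rho_s set11.
rewrite inE => /andP [ws w_rho]; exists w => //; apply/eqP.
by rewrite eq_sym eqEcard subUset sub1set w_rho s_rho cardsU1 ws rho_card /=.
Qed.

Definition star_supported (k : nat) (S : {set {set 'I_n}}) R :=
  forall rho, #|rho| = k -> R rho != 0 -> exists2 s, s \in S & s \subset rho.

Section StarReduction.
Variables (d : nat) (S : {set {set 'I_n}}) (s : {set 'I_n}).
Hypotheses (sS : s \in S) (S_card : {in S, forall t, #|t| = d.+1})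
  (S_small : (#|S| + d.+2 <= n)%N).

Definition free_over A := [forall t in S :\ s, ~~ (t \subset A)].

Lemma link_obstruction w0 w x :
  free_over (w0 |: s) -> free_over (w |: s) ->
  ~~ free_over (w0 |: (x |: s)) || ~~ free_over (x |: (w |: s)) ->
  exists2 t, t \in S :\ s & (x \in t) && (t \subset x |: (w0 |: (w |: s))).
Proof.
move=> free0 free1 bad.
have [t tS t_sub] : exists2 t, t \in S :\ s &
    (t \subset w0 |: (x |: s)) || (t \subset x |: (w |: s)).
  by case/orP: bad => /forall_inPn [t tS /negPn t_sub]; exists t; rewrite // t_sub ?orbT.
have xt : x \in t.
  apply/negPn/negP => xt; case/orP: t_sub => t_sub.
  - by case/negP: (forall_inP free0 t tS); apply: subsetU1_notin xt; rewrite setUCA.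
  - by case/negP: (forall_inP free1 t tS); apply: subsetU1_notin xt.
exists t => //; rewrite xt /=; case/orP: t_sub => /subset_trans; apply.
  by rewrite [w0 |: _]setUCA; apply: setUS; apply: setUS; apply: subsetUr.
by apply: setUS; apply: subsetUr.
Qed.

(* Otherwise every x outside B is the only vertex outside B of some member of
   S :\ s other than t0, and there are more such x than such members. *)
Lemma free_over_link w0 w :
  w0 \notin s -> w \notin s -> w0 != w ->
  free_over (w0 |: s) -> free_over (w |: s) -> ~~ free_over (w0 |: (w |: s)) ->
  exists2 x, x \notin w0 |: (w |: s) &
    free_over (w0 |: (x |: s)) && free_over (x |: (w |: s)).
Proof.
move=> w0s ws w0w free0 free1 /forall_inPn [t0 t0S /negPn t0_sub].
set B := w0 |: (w |: s).
have [/exists_inP [x xB linked] | no_link] := boolP [exists x in ~: B,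
    free_over (w0 |: (x |: s)) && free_over (x |: (w |: s))].
  by exists x; rewrite // -in_setC.
exfalso; pose pick_out t := odflt w0 [pick y in t :\: B].
have cover : ~: B \subset pick_out @: ((S :\ s) :\ t0).
  apply/subsetP => x xB; have := xB; rewrite inE => xB'.
  have bad : ~~ free_over (w0 |: (x |: s)) || ~~ free_over (x |: (w |: s)).
    by rewrite -negb_and; apply: (exists_inPn no_link).
  have [t tS /andP [xt t_sub]] := link_obstruction free0 free1 bad.
  apply/imsetP; exists t.
    rewrite in_setD1 tS andbT; apply: contraNneq xB' => tt0.
    by apply: (subsetP t0_sub); rewrite -tt0.
  rewrite /pick_out; case: pickP => [y|/(_ x)]; last by rewrite in_setD xB' xt.
  rewrite in_setD => /andP [yB yt]; move: (subsetP t_sub y yt).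
  by rewrite in_setU1 (negbTE yB) orbF => /eqP.
have B_card : #|B| = d.+3.
  by rewrite !cardsU1 !inE negb_or w0w w0s ws S_card.
have coB_card : #|~: B| = (n - d.+3)%N by rewrite cardsCs setCK card_ord B_card.
have := leq_trans (subset_leq_card cover) (leq_imset_card _ _).
rewrite coB_card.
have := S_small; rewrite (cardsD1 s S) sS (cardsD1 t0 (S :\ s)) t0S /=.
move: #|S :\ s :\ t0| => m; lia.
Qed.

Lemma free_overS A B : B \subset A -> free_over A -> free_over B.
Proof.
move=> BA /forall_inP freeA; apply/forall_inP => t tS.
by apply: contra (freeA t tS) => /subset_trans; apply.
Qed.

Variable R : cochain F n.
Hypotheses (R_closed : coclosed d.+3 R) (R_supp : star_supported d.+2 S R).

Local Notation shift mu := (R - coboundary (elementary_cochain mu s)).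

Lemma shift_eq0 mu rho :
  #|rho| = d.+2 -> ~~ (s \subset rho) -> free_over rho -> shift mu rho = 0.
Proof.
move=> rho_card s_rho /forall_inP free_rho.
rewrite !ffunE coboundary_coef_elementary_eq0 // subr0.
apply/eqP/negP => /negP /(R_supp rho_card) [t tS t_rho].
have [ts | ts] := eqVneq t s; first by rewrite -ts t_rho in s_rho.
have tS' : t \in S :\ s by rewrite in_setD1 ts.
by case/negP: (free_rho t tS').
Qed.

Lemma shift_transfer mu a b :
  a \notin s -> b \notin s -> a != b -> free_over (a |: (b |: s)) ->
  shift mu (a |: s) = 0 -> shift mu (b |: s) = 0.
Proof.
move=> a_s b_s ab free_ab.
have ab_card : #|a |: (b |: s)| = d.+3.
  by rewrite !cardsU1 !inE negb_or ab a_s b_s S_card.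
apply: coboundary_eq0_face_transfer => //.
  exact: coclosedB R_closed (coclosed_coboundary _) _ ab_card.
move=> p ps; have p_in : p \in a |: (b |: s) by rewrite !in_setU1 ps !orbT.
apply: shift_eq0.
- by move: (cardsD1 p (a |: (b |: s))); rewrite ab_card p_in add1n => -[].
- by apply/subsetPn; exists p; rewrite // !inE eqxx.
- exact: free_overS (subD1set _ _) free_ab.
Qed.

Lemma shift_eq0_free mu w0 w :
  w0 \notin s -> w \notin s -> free_over (w0 |: s) -> free_over (w |: s) ->
  shift mu (w0 |: s) = 0 -> shift mu (w |: s) = 0.
Proof.
move=> w0s ws free0 free1 shift0.
have [<- // | w0w] := eqVneq w0 w.
have [free01 | not_free01] := boolP (free_over (w0 |: (w |: s))).
  exact: shift_transfer free01 shift0.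
have [x xB /andP [free0x freexw]] := free_over_link w0s ws w0w free0 free1 not_free01.
move: xB; rewrite !in_setU1 !negb_or => /and3P [xw0 xw xs].
apply: (shift_transfer xs ws xw freexw).
by apply: (shift_transfer w0s xs _ free0x shift0); rewrite eq_sym.
Qed.

(* mu is chosen to cancel the coefficient at w0 |: s; the cancellation spreads
   to every free w |: s along free (d+2)-simplices. *)
Lemma star_supported_shift : exists mu, star_supported d.+2 (S :\ s) (shift mu).
Proof.
pose free w := (w \notin s) && free_over (w |: s).
have shift_vanish mu : (forall w, free w -> shift mu (w |: s) = 0) ->
    star_supported d.+2 (S :\ s) (shift mu).
  move=> vanish rho rho_card.
  have [/exists_inP [t tS t_rho] _ | ] := boolP [exists t in S :\ s, t \subset rho].
    by exists t.
  rewrite negb_exists_in => free_rho; suff -> : shift mu rho = 0 by rewrite eqxx.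
  have [s_rho | s_rho] := boolP (s \subset rho); last exact: shift_eq0.
  have [w ws rho_ws] : exists2 w, w \notin s & rho = w |: s.
    by apply: setU1_of_subset_card; rewrite // rho_card S_card.
  by rewrite rho_ws in free_rho *; apply: vanish; rewrite /free ws.
case: (pickP free) => [w0 /andP [w0s free0] | no_free]; last first.
  by exists 0; apply: shift_vanish => w; rewrite no_free.
exists (R (w0 |: s) / simplex_sign F (w0 |: s) w0).
apply: shift_vanish => w /andP [ws free1]; apply: (shift_eq0_free w0s ws free0 free1).
by rewrite !ffunE coboundary_coef_elementaryU1 // mulrC divfK ?subrr ?simplex_sign_neq0.
Qed.

End StarReduction.

Lemma star_supported_coboundary d S R :
  {in S, forall t, #|t| = d.+1} -> (#|S| + d.+2 <= n)%N ->
  coclosed d.+3 R -> star_supported d.+2 S R ->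
  exists2 e : cochain F n, (forall t, e t != 0 -> t \in S) &
    forall rho, #|rho| = d.+2 -> coboundary_coef e rho = R rho.
Proof.
have [k] := ubnP #|S|; elim: k S R => // k IH S R S_lt S_card S_small R_closed R_supp.
have [S0 | [s sS]] := set_0Vmem S.
  exists 0 => [t | rho rho_card]; first by rewrite ffunE eqxx.
  rewrite /coboundary_coef big1 => [|p _]; last by rewrite ffunE mulr0.
  apply/esym/eqP; apply: contraT => /(R_supp rho rho_card) [s].
  by rewrite S0 inE.
have [mu R'_supp] := star_supported_shift sS S_card S_small R_closed R_supp.
have S'_lt : (#|S :\ s| < k)%N by move: S_lt; rewrite (cardsD1 s S) sS.
have S'_card : {in S :\ s, forall t, #|t| = d.+1} by move=> t /setD1P [_ /S_card].
have S'_small : (#|S :\ s| + d.+2 <= n)%N.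
  by move: S_small; rewrite (cardsD1 s S) sS add1n addSn => /ltnW.
have [e' e'_supp e'_cob] :=
  IH _ _ S'_lt S'_card S'_small (coclosedB R_closed (coclosed_coboundary _)) R'_supp.
exists (e' + elementary_cochain mu s) => [t | rho rho_card].
  rewrite !ffunE; have [-> // | ts] := eqVneq t s.
  by rewrite addr0 => /e'_supp /setD1P [].
by rewrite coboundary_coefD e'_cob // !ffunE subrK.
Qed.

Lemma cocycle_face_neq0 d H (x : {set 'I_n}) w :
  is_dcocycle d H -> H x != 0 -> w \notin x ->
  exists2 p, p \in x & H ((w |: x) :\ p) != 0.
Proof.
move=> [H_chain H_closed] Hx wx; apply/exists_inP; apply: contraT.
rewrite negb_exists_in => /forall_inP faces0.
have := H_closed (w |: x); rewrite cardsU1 wx (H_chain x Hx) => /(_ erefl).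
rewrite /coboundary_coef (bigD1 w) ?setU11 //= setU1K // big1 ?addr0.
  by move/eqP; rewrite mulf_eq0 (negbTE (simplex_sign_neq0 _ _)) (negbTE Hx).
move=> p /andP [p_in pw]; have px : p \in x by rewrite in_setU1 (negbTE pw) in p_in.
by move/negPn/eqP: (faces0 p px) ->; rewrite mulr0.
Qed.

Lemma cocycle_supp_card d H : is_dcocycle d H -> H != 0 -> (n - d <= #|supp H|)%N.
Proof.
move=> H_cocycle Hnz; have [x Hx] : exists x, H x != 0.
  apply/existsP; apply: contraNT Hnz => /existsPn H0.
  by apply/eqP/ffunP => t; rewrite ffunE; apply/eqP/negbNE/H0.
pose face w := odflt x [pick q in [set (w |: x) :\ p | p in x] | H q != 0].
have face_spec w : w \notin x -> [/\ H (face w) != 0, w \in face w & face w \subset w |: x].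
  move=> wx; rewrite /face; case: pickP => [q /andP [/imsetP [p px ->] Hp] | none] /=.
    split => //; last exact: subD1set.
    by rewrite !inE eqxx andbT; apply: contraNneq wx => ->.
  have [p px Hp] := cocycle_face_neq0 H_cocycle Hx wx.
  by move: (none ((w |: x) :\ p)); rewrite Hp andbT (imset_f (fun p => (w |: x) :\ p) px).
have face_inj : {in ~: x &, injective face}.
  move=> w1 w2; rewrite !inE => w1x w2x e.
  have [_ w1f _] := face_spec w1 w1x; have [_ _ f2] := face_spec w2 w2x.
  by move: (subsetP f2 w1); rewrite -e => /(_ w1f) /setU1P [] //; rewrite (negbTE w1x).
have x_faces : x |: (face @: ~: x) \subset supp H.
  apply/subsetP => t /setU1P [-> | /imsetP [w]]; first by rewrite inE.
  by rewrite inE => wx ->; have [] := face_spec w wx; rewrite inE.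
have x_notin : x \notin face @: ~: x.
  apply/imsetP => -[w]; rewrite inE => wx e.
  by have [_ + _] := face_spec w wx; rewrite -e (negbTE wx).
have := subset_leq_card x_faces; rewrite cardsU1 x_notin card_in_imset //.
have := cardsC x; rewrite card_ord (H_cocycle.1 x Hx) /=; move: #|~: x| #|supp H| => c m; lia.
Qed.

Lemma facet_adj_setD1 d rho p q :
  #|rho| = d.+2 -> p \in rho -> q \in rho -> p != q -> facet_adj d (rho :\ p) (rho :\ q).
Proof.
move=> rho_card p_rho q_rho pq; apply/andP; split.
  by apply: contra_neq pq => /setP /(_ q); rewrite !inE eqxx q_rho andbT => /eqP.
have q_rho' : q \in rho :\ p by rewrite !inE eq_sym pq.
have -> : (rho :\ p) :&: (rho :\ q) = rho :\ p :\ q.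
  by apply/setP => t; rewrite !inE; case: (t == p); case: (t == q); case: (t \in rho).
move: (cardsD1 p rho) (cardsD1 q (rho :\ p)); rewrite p_rho q_rho' rho_card /=.
by move: #|rho :\ p| #|rho :\ p :\ q| => a b; lia.
Qed.

Definition restrict_cochain g (A : {set {set 'I_n}}) : cochain F n :=
  [ffun t => if t \in A then g t else 0].

(* If some facet of rho lies in A, then so do all facets of rho in the support
   of H, since they are pairwise adjacent: the restriction agrees with H on
   the boundary of rho. *)
Lemma coboundary_restrict_star_supported d H S (A : {set {set 'I_n}}) :
  is_dcocycle d H -> A \subset supp H :\: S ->
  {in A & supp H :\: S, forall u v, facet_adj d u v -> v \in A} ->
  star_supported d.+2 S (coboundary (restrict_cochain H A)).
Proof.
move=> [_ H_closed] AW A_closed rho rho_card; rewrite ffunE.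
have [/exists_inP [s sS s_rho] _ | noS] := boolP [exists s in S, s \subset rho].
  by exists s.
suff -> : coboundary_coef (restrict_cochain H A) rho = 0 by rewrite eqxx.
have [/exists_inP [p0 p0_rho p0A] | noA] := boolP [exists p in rho, rho :\ p \in A].
  rewrite -(H_closed rho rho_card); apply: eq_bigr => p p_rho; rewrite ffunE.
  case: ifP => // pA; congr (_ * _); apply/esym/eqP; apply: contraFT pA => Hp.
  have pW : rho :\ p \in supp H :\: S.
    rewrite !inE Hp andbT; apply: contra noS => pS.
    by apply/exists_inP; exists (rho :\ p); rewrite ?subD1set.
  have [<- // | p0p] := eqVneq p0 p.
  exact: A_closed p0A pW (facet_adj_setD1 rho_card p0_rho p_rho p0p).
rewrite /coboundary_coef big1 // => p p_rho; rewrite ffunE ifF ?mulr0 //.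
by apply: contraNF noA => pA; apply/exists_inP; exists p.
Qed.

Lemma hypercut_adjacency_closed d H S (A : {set {set 'I_n}}) :
  is_hypercut d H -> S \subset supp H -> (#|S| + d.+2 <= n)%N ->
  A \subset supp H :\: S ->
  {in A & supp H :\: S, forall u v, facet_adj d u v -> v \in A} ->
  A != set0 -> A = supp H :\: S.
Proof.
move=> [H_cocycle _ H_min] SH S_small AW A_closed /set0Pn [x xA].
have S_card : {in S, forall t, #|t| = d.+1}.
  by move=> t /(subsetP SH); rewrite inE; apply: H_cocycle.1.
have [e e_supp e_cob] := star_supported_coboundary S_card S_small
  (coclosed_coboundary _) (coboundary_restrict_star_supported H_cocycle AW A_closed).
pose Z := restrict_cochain H A - e.
have e_out t : t \notin S -> e t = 0.
  by move=> tS; apply/eqP; apply: contraNT tS => /e_supp.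
have Z_outS t : t \notin S -> Z t = if t \in A then H t else 0.
  by move=> tS; rewrite !ffunE e_out // subr0.
have Z_supp t : Z t != 0 -> H t != 0.
  have [/(subsetP SH) | tS] := boolP (t \in S); first by rewrite inE.
  by rewrite Z_outS //; case: ifP; rewrite ?eqxx.
have Z_cocycle : is_dcocycle d Z.
  split=> [t /Z_supp /H_cocycle.1 // | rho rho_card].
  by rewrite coboundary_coefB e_cob // ffunE subrr.
have Z_supp_sub : supp Z \subset supp H.
  by apply/subsetP => t; rewrite !inE; apply: Z_supp.
have [a Ha] := H_min Z Z_cocycle Z_supp_sub.
have := subsetP AW x xA; rewrite !inE => /andP [xS Hx].
have a1 : a = 1.
  have := Ha x; rewrite Z_outS // xA => /(congr1 (fun z => z / H x)).
  by rewrite divff // mulfK.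
apply/eqP; rewrite eqEsubset AW; apply/subsetP => y yW.
move: (yW); rewrite !inE => /andP [yS Hy].
have := Ha y; rewrite Z_outS // a1 mul1r; case: ifP => // _ H0.
by rewrite -H0 eqxx in Hy.
Qed.

End Cochains.

Unset Implicit Arguments.
Theorem theorem4p7 (F : fieldType) (n d : nat) (H : cochain F n) :
  (1 <= d)%N -> (d + 2 <= n)%N -> is_hypercut d H ->
  k_connected (supp H) (@facet_adj n d) (n - d - 1).
Proof.
move=> _ dn H_hypercut S SH S_lt.
have [H_cocycle Hnz _] := H_hypercut.
have S_small : (#|S| + d.+2 <= n)%N by lia.
split.
  apply: contraTneq (cocycle_supp_card H_cocycle Hnz) => /eqP.
  rewrite setD_eq0 => /subset_leq_card; rewrite -ltnNge; lia.
move=> x y xW yW.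
pose A := [set u in supp H :\: S | connect
  (fun u v => [&& u \in supp H :\: S, v \in supp H :\: S & facet_adj d u v]) x u].
have A_W : A = supp H :\: S.
  apply: hypercut_adjacency_closed H_hypercut SH S_small _ _ _.
  - by apply/subsetP => u; rewrite inE => /andP [].
  - move=> u v; rewrite inE => /andP [uW xu] vW uv; rewrite inE vW.
    by apply: connect_trans xu (connect1 _); rewrite /= uW vW.
  - by apply/set0Pn; exists x; rewrite inE xW connect0.
have : y \in A by rewrite A_W.
by rewrite inE => /andP [_].
Qed.
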